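(* Let $\{f_t\}$ be the sequence generated by POLK with $f_0=0$, and suppose Assumptions (A1)–(A4) hold. Then for all $t$, $$\mathbb E\big[\|f_{t+1}-f^*\|_{\mathcal H}^2\mid\mathcal F_t\big]\le\|f_t-f^*\|_{\mathcal H}^2-2\eta_t\,[R(f_t)-R(f^* )]+2\epsilon_t\|f_t-f^*\|_{\mathcal H}+\eta_t^2\sigma^2.$$
   Context: Setting: $\mathcal X\subset\mathbb R^p$, $\mathcal Y\subset\mathbb R$; $\mathcal H$ is a reproducing kernel Hilbert space of functions $f:\mathcal X\to\mathbb R$ with reproducing kernel $\kappa$ (so $\langle f,\kappa(x,\cdot)\rangle_{\mathcal H}=f(x)$). $(x,y)$ is a random pair on $\mathcal X\times\mathcal Y$ with a fixed joint distribution, and $(x_t,y_t)$, $t=0,1,2,\dots$ are i.i.d. copies of it. The loss is $\ell:\mathbb R\times\mathcal Y\to\mathbb R$, $\ell'(z,y)=\partial\ell(z,y)/\partial z$. With $\lambda>0$, the regularized expected risk is $R(f)=\mathbb E_{x,y}[\ell(f(x),y)]+\frac{\lambda}{2}\|f\|_{\mathcal H}^2$ and $f^*=\arg\min_{f\in\mathcal H}R(f)$. POLK (Parsimonious Online Learning with Kernels): given step-sizes $\eta_t>0$ and approximation budgets $\epsilon_t>0$, set $f_0=0$ with empty dictionary $D_0$. At step $t$, with $f_t=\sum_{n=1}^{M_t}w_n\kappa(d_n,\cdot)$ parameterized by dictionary $D_t=[d_1,\dots,d_{M_t}]$, form $\tilde f_{t+1}=(1-\eta_t\lambda)f_t-\eta_t\ell'(f_t(x_t),y_t)\kappa(x_t,\cdot)$,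 represented by dictionary $\tilde D_{t+1}=[D_t,\,x_t]$. Then apply destructive kernel orthogonal matching pursuit (KOMP) with budget $\epsilon_t$: starting from $D=\tilde D_{t+1}$, repeatedly compute for each remaining element $d_j$ the error $\gamma_j=\min_{w}\|\tilde f_{t+1}-\sum_{k\neq j}w_k\kappa(d_k,\cdot)\|_{\mathcal H}$; if $\min_j\gamma_j>\epsilon_t$ stop, otherwise remove the minimizing element and continue (while the dictionary is nonempty). The output dictionary is $D_{t+1}$, and $f_{t+1}$ is the orthogonal projection of $\tilde f_{t+1}$ onto $\mathcal H_{D_{t+1}}=\mathrm{span}\{\kappa(d,\cdot):d\in D_{t+1}\}$; thus $\|f_{t+1}-\tilde f_{t+1}\|_{\mathcal H}\le\epsilon_t$. Define $\hat\nabla_t=\ell'(f_t(x_t),y_t)\kappa(x_t,\cdot)+\lambda f_t$ and the projected stochastic gradient $\tilde\nabla_t=(f_t-f_{t+1})/\eta_t$, so $f_{t+1}=f_t-\eta_t\tilde\nabla_t$. $\mathcal F_t$ denotes the sigma-algebra generated by the algorithm history up to time $t$ (so that $\mathbb E[\hat\nabla_t\mid\mathcal F_t]=\nabla_f R(f_t)$). Assumptions: (A1) $\mathcal X$ and $\mathcal Y$ are compact and $\sup_{x\in\mathcal X}\sqrt{\kappa(x,x)}=X<\infty$. (A2) $\ell$ is $C$-Lipschitz in its first argument: $|\ell(z,y)-\ell(z',y)|\le C|z-z'|$ for all $z,z'\in\mathbb R$, $y\in\mathcal Y$. (A3) $\ell(z,y)$ is convex and differentiable in $z$ on $\mathbb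 R$ for all $y$. (A4) $\mathbb E[\|\tilde\nabla_t\|_{\mathcal H}^2\mid\mathcal F_t]\le\sigma^2$ for all $t$. *)

From HB Require Import structures.
From mathcomp Require Import all_boot all_order all_algebra.
From mathcomp Require Import all_classical all_reals all_analysis.
Set Implicit Arguments. Unset Strict Implicit. Unset Printing Implicit Defensive.
Import Order.TTheory GRing.Theory Num.Theory.
Import numFieldNormedType.Exports.
Local Open Scope classical_set_scope.
Local Open Scope ring_scope.

(* The carrier is an abstract real vector space H with an
   inner product [ip]; an element f : H is identified with the function
   x |-> f(x) := <f, kappa(x,.)> (reproducing property), and the map
   f |-> (x |-> f(x)) on Xs is injective (elements of H ARE functions on Xs). *)
Record rkhs (R : realType) (V : Type) (Xs : set V) (H : lmodType R) := RKHS {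
  ip : H -> H -> R;
  ksec : V -> H;
  ipC : forall f g, ip f g = ip g f;
  ipDl : forall (a : R) f g h, ip (a *: f + g) h = a * ip f h + ip g h;
  ip_ge0 : forall f, 0 <= ip f f;
  ip_eq0 : forall f, ip f f = 0 -> f = 0;
  ip_complete : forall u : nat -> H,
    (forall e : R, 0 < e -> exists N : nat, forall m n : nat, (N <= m)%N -> (N <= n)%N ->
        Num.sqrt (ip (u m - u n) (u m - u n)) < e) ->
    exists l : H, forall e : R, 0 < e -> exists N : nat, forall n : nat, (N <= n)%N ->
        Num.sqrt (ip (u n - l) (u n - l)) < e;
  eval_inj : forall f g, (forall x, Xs x -> ip f (ksec x) = ip g (ksec x)) -> f = g
}.

Section RKHSDefs.
Context {R : realType} {V : zmodType} {Xs : set V} {H : lmodType R}.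
Variable K : rkhs Xs H.

Definition hnorm (f : H) : R := Num.sqrt (ip K f f).
Definition ev (f : H) (x : V) : R := ip K f (ksec K x).
Definition kappa (x x' : V) : R := ip K (ksec K x) (ksec K x').

Definition spanD (D : seq V) : set H :=
  [set g | exists w : nat -> R, g = \sum_(i < size D) w i *: ksec K (nth 0 D i)].

Definition is_proj (D : seq V) (g p : H) : Prop :=
  spanD D p /\ forall q, spanD D q -> ip K (g - p) q = 0.

Definition rem_idx (D : seq V) (j : nat) : seq V := take j D ++ drop j.+1 D.

Definition gamma (g : H) (D : seq V) (j : nat) : R :=
  inf [set hnorm (g - q) | q in spanD (rem_idx D j)].

(* destructive kernel orthogonal matching pursuit with budget eps, applied
   to the function g: komp_run eps g D D' means that, starting from the
   dictionary D, the procedure can terminate with output dictionary D'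
   (any minimizing index may be removed in case of ties). *)
Inductive komp_run (eps : R) (g : H) : seq V -> seq V -> Prop :=
| komp_nil : komp_run eps g [::] [::]
| komp_stop D : D <> [::] ->
    (forall j, (j < size D)%N -> eps < gamma g D j) -> komp_run eps g D D
| komp_remove D j D' : (j < size D)%N ->
    (forall k, (k < size D)%N -> gamma g D j <= gamma g D k) ->
    gamma g D j <= eps ->
    komp_run eps g (rem_idx D j) D' -> komp_run eps g D D'.

End RKHSDefs.

Definition lossd {R : realType} (l : R -> R -> R) (z y : R) : R :=
  derive1 (fun z' => l z' y) z.

Definition upd {T : Type} (s : nat -> T) (t : nat) (z : T) : nat -> T :=
  fun i => if i == t then z else s i.

Local Open Scope ereal_scope.
(* regularized expected risk R(f) = E[l(f(x),y)] + lam/2 ||f||^2, where the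
   random pair (x,y) is (xo z, yo z) with z ~ mu *)
Definition risk {R : realType} {V : zmodType} {Xs : set V} {H : lmodType R}
  (K : rkhs Xs H) {d : measure_display} {Z : measurableType d}
  (mu : probability Z R) (xo : Z -> V) (yo : Z -> R) (l : R -> R -> R)
  (lam : R) (f : H) : R :=
  (fine (\int[mu]_z (l (ev K f (xo z)) (yo z))%:E) + lam / 2 * hnorm K f ^+ 2)%R.

(* Since f_t depends only on the samples before time t, the expectation
   E[. | F_t] integrates over the fresh sample (x_t, y_t) alone.  Writing
   f_{t+1} = f_t - eta_t g_t, where g_t is the projected stochastic gradient,
   ||f_{t+1} - f*||^2 = ||f_t - f*||^2 - 2 eta_t <f_t - f*, g_t> + eta_t^2 ||g_t||^2,
   and eta_t g_t differs from the unprojected step eta_t (l'(f_t(x_t), y_t)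
   kappa(x_t, .) + lam f_t) by the KOMP error, of norm at most eps_t; by
   Cauchy-Schwarz this costs 2 eps_t ||f_t - f*||.  The tangent inequality of
   the convex loss and the convexity of lam/2 ||.||^2 bound the inner product
   with the unprojected step below by the pointwise excess risk, whose
   expectation is the risk gap R f_t - R f*; (A4) bounds the last term by
   eta_t^2 sigma^2. *)

From Pilot Require Import Defs.
From HB Require Import structures.
From mathcomp Require Import all_boot all_order all_algebra.
From mathcomp Require Import all_classical all_reals all_analysis.
From mathcomp Require Import ring lra.
Set Implicit Arguments. Unset Strict Implicit. Unset Printing Implicit Defensive.
Import Order.TTheory GRing.Theory Num.Theory.
Import numFieldNormedType.Exports.
Local Open Scope classical_set_scope.
Local Open Scope ring_scope.

Definition convex_real {R : realType} (g : R -> R) : Prop :=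
  forall a b u : R, 0 <= u -> u <= 1 ->
    g (u * a + (1 - u) * b) <= u * g a + (1 - u) * g b.

Section ConvexTangent.
Variables (R : realType) (f : R -> R).

Lemma derive1_quotient_cvg u : derivable f u 1 ->
  (fun h => h^-1 * (f (h + u) - f u)) @ 0^' --> derive1 f u.
Proof.
move=> df; rewrite derive1E.
have -> : (fun h => h^-1 * (f (h + u) - f u)) =
          (fun h => h^-1 *: ((f \o shift u) (h *: 1) - f u)).
  apply/funext => h /=; congr (_ * (f (_ + _) - _)); exact/esym/mulr1.
exact: df.
Qed.

Hypothesis f_convex : convex_real f.

Lemma convex_secant_le u v h : 0 < h / (v - u) -> h / (v - u) <= 1 ->
  f (h + u) - f u <= h * ((f v - f u) / (v - u)).
Proof.
move=> t_gt0 t_le1.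
have vu_neq0 : v - u != 0.
  by apply: contraTneq t_gt0 => ->; rewrite invr0 mulr0 ltxx.
have := f_convex v u (ltW t_gt0) t_le1.
have -> : h / (v - u) * v + (1 - h / (v - u)) * u = h + u by field.
have -> : h * ((f v - f u) / (v - u)) = h / (v - u) * (f v - f u) by field.
lra.
Qed.

Lemma convex_derive1_le u v : derivable f u 1 ->
  derive1 f u * (v - u) <= f v - f u.
Proof.
move=> /derive1_quotient_cvg dq.
(* Whatever the sign of [h], multiplying by [h] turns the comparison of the
   difference quotient at [h] with the secant slope into [convex_secant_le]. *)
have quotient_le h : h != 0 -> 0 < h / (v - u) -> h / (v - u) <= 1 ->
    h * (h^-1 * (f (h + u) - f u)) <= h * ((f v - f u) / (v - u)).
  by move=> h_neq0 t_gt0 t_le1; rewrite mulVKf //; exact: convex_secant_le.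
case: (ltgtP u v) => [uv|vu|<-]; last by rewrite !subrr mulr0.
- have vu_gt0 : 0 < v - u by rewrite subr_gt0.
  rewrite -ler_pdivlMr //.
  apply: (cvgr_to_le (cvg_dnbhs_at_right dq)); near=> h.
  have h_gt0 : 0 < h by near: h; exact: nbhs_right_gt.
  have h_lt : h < v - u by near: h; exact: nbhs_right_lt.
  rewrite -(ler_pM2l h_gt0); apply: quotient_le; first exact: lt0r_neq0.
    exact: divr_gt0.
  by rewrite ler_pdivrMr // mul1r ltW.
- have vu_lt0 : v - u < 0 by rewrite subr_lt0.
  rewrite -ler_ndivrMr //.
  apply: (cvgr_to_ge (cvg_dnbhs_at_left dq)); near=> h.
  have h_lt0 : h < 0 by near: h; exact: nbhs_left_lt.
  have h_gt : v - u < h by near: h; exact: nbhs_left_gt.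
  rewrite -(ler_nM2l h_lt0); apply: quotient_le; first exact: ltr0_neq0.
    by rewrite ltr_ndivlMr // mul0r.
  by rewrite ler_ndivrMr // mul1r ltW.
Unshelve. all: by end_near.
Qed.

End ConvexTangent.

Section InnerProduct.
Variables (R : realType) (V : zmodType) (Xs : set V) (H : lmodType R).
Variable K : rkhs Xs H.
Local Notation ip := (ip K).
Local Notation hnorm := (hnorm K).
Implicit Types f g h : H.

Lemma ip_addl f g h : ip (f + g) h = ip f h + ip g h.
Proof. by have := ipDl K 1 f g h; rewrite scale1r mul1r. Qed.

Lemma ip0l g : ip 0 g = 0.
Proof. by have := ip_addl 0 0 g; rewrite addr0; lra. Qed.

Lemma ipZl a f g : ip (a *: f) g = a * ip f g.
Proof. by have := ipDl K a f 0 g; rewrite !addr0 ip0l addr0. Qed.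

Lemma ipNl f g : ip (- f) g = - ip f g.
Proof. by rewrite -scaleN1r ipZl mulN1r. Qed.

Lemma ipBl f g h : ip (f - g) h = ip f h - ip g h.
Proof. by rewrite ip_addl ipNl. Qed.

Lemma ip_addr f g h : ip h (f + g) = ip h f + ip h g.
Proof. by rewrite ipC ip_addl ipC [ip g _]ipC. Qed.

Lemma ipZr a f g : ip f (a *: g) = a * ip f g.
Proof. by rewrite ipC ipZl ipC. Qed.

Lemma ipNr f g : ip f (- g) = - ip f g.
Proof. by rewrite ipC ipNl ipC. Qed.

Lemma ipBr f g h : ip h (f - g) = ip h f - ip h g.
Proof. by rewrite ip_addr ipNr. Qed.

Lemma ip_sqrD f g : ip (f + g) (f + g) = ip f f + 2 * ip f g + ip g g.
Proof. by rewrite ip_addl !ip_addr (ipC K g f); lra. Qed.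

Lemma ip_sqr_sub_le f g : ip f f - ip g g <= 2 * ip (f - g) f.
Proof.
have := ip_ge0 K (f - g).
by rewrite !ipBl !ipBr (ipC K g f); lra.
Qed.

Lemma hnorm_ge0 f : 0 <= hnorm f.
Proof. exact: sqrtr_ge0. Qed.

Lemma hnorm_sqr f : hnorm f ^+ 2 = ip f f.
Proof. by rewrite /Defs.hnorm sqr_sqrtr // ip_ge0. Qed.

Lemma hnormZ a f : hnorm (a *: f) = `|a| * hnorm f.
Proof.
by rewrite /Defs.hnorm ipZl ipZr mulrA -expr2 sqrtrM ?sqr_ge0 // sqrtr_sqr.
Qed.

Lemma hnormN f : hnorm (- f) = hnorm f.
Proof. by rewrite -scaleN1r hnormZ normrN normr1 mul1r. Qed.

Lemma cauchy_schwarz f g : ip f g <= hnorm f * hnorm g.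
Proof.
suff ip_sqr_le : ip f g ^+ 2 <= ip f f * ip g g.
  rewrite /Defs.hnorm -sqrtrM ?ip_ge0 //.
  apply: le_trans (ler_norm _) _.
  by rewrite -sqrtr_sqr ler_sqrt // mulr_ge0 ?ip_ge0.
have [ff_gt0|] := ltrP 0 (ip f f); last first.
  rewrite le_eqVlt ltNge ip_ge0 orbF => /eqP/ip_eq0 ->.
  by rewrite !ip0l expr0n /= mul0r.
have := ip_ge0 K (ip f f *: g - ip f g *: f).
rewrite !ipBl !ipBr !ipZl !ipZr (ipC K g f) => q_ge0.
nra.
Qed.

End InnerProduct.

Section Dictionary.
Variables (R : realType) (V : zmodType) (Xs : set V) (H : lmodType R).
Variable K : rkhs Xs H.
Local Notation hnorm := (hnorm K).
Local Notation spanD := (spanD K).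
Implicit Types (D : seq V) (f g p q : H).

Lemma spanD0 D : spanD D 0.
Proof. by exists (fun _ => 0); rewrite big1 // => i _; rewrite scale0r. Qed.

Lemma spanDB D p q : spanD D p -> spanD D q -> spanD D (p - q).
Proof.
move=> [w1 ->] [w2 ->]; exists (fun i => w1 i - w2 i).
by rewrite -sumrB; apply: eq_bigr => i _; rewrite scalerBl.
Qed.

Lemma spanDZ D c p : spanD D p -> spanD D (c *: p).
Proof.
move=> [w ->]; exists (fun i => c * w i).
by rewrite scaler_sumr; apply: eq_bigr => i _; rewrite scalerA.
Qed.

Lemma spanD_rcons D x f : spanD D f -> spanD (rcons D x) f.
Proof.
move=> [w ->]; exists (fun i => if (i < size D)%N then w i else 0).
rewrite size_rcons big_ord_recr /= ltnn scale0r addr0.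
by apply: eq_bigr => i _; rewrite ltn_ord nth_rcons ltn_ord.
Qed.

Lemma spanD_rcons_ksec D x : spanD (rcons D x) (ksec K x).
Proof.
exists (fun i => if i == size D then 1 else 0).
rewrite size_rcons big_ord_recr /= eqxx scale1r nth_rcons ltnn eqxx.
by rewrite big1 ?add0r // => i _; rewrite ltn_eqF ?scale0r.
Qed.

Lemma proj_dist_le D g p q : is_proj K D g p -> spanD D q ->
  hnorm (g - p) <= hnorm (g - q).
Proof.
move=> [sp orth] sq.
have gq : g - q = (g - p) + (p - q) by rewrite addrA subrK.
rewrite /Defs.hnorm ler_sqrt ?ip_ge0 // gq (ip_sqrD K (g - p)).
rewrite (orth (p - q) (spanDB sp sq)).
by have := ip_ge0 K (p - q); lra.
Qed.

Lemma proj_dist_le_inf D g p : is_proj K D g p ->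
  hnorm (g - p) <= inf [set hnorm (g - q) | q in spanD D].
Proof.
move=> pr; apply: lb_le_inf; first by exists (hnorm (g - 0)), 0 => //; exact: spanD0.
by move=> _ [q sq <-]; exact: proj_dist_le pr sq.
Qed.

Lemma komp_run_out eps g D D' : komp_run K eps g D D' ->
  D' = D \/ inf [set hnorm (g - q) | q in spanD D'] <= eps.
Proof. by elim=> [|D0 _ _|D0 j D1 _ _ gamma_le _ [->|]]; [left|left|right|right]. Qed.

(* KOMP either keeps the dictionary, which already spans [g], or stops after a
   removal whose approximation error [gamma] was at most [eps]. *)
Lemma komp_proj_dist_le eps g D D' p : 0 <= eps ->
  komp_run K eps g D D' -> spanD D g -> is_proj K D' g p -> hnorm (g - p) <= eps.
Proof.
move=> eps_ge0 run gD pr; case: (komp_run_out run) => [eD|inf_le].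
  have gD' : spanD D' g by rewrite eD.
  apply: le_trans (proj_dist_le pr gD') _.
  by rewrite subrr /Defs.hnorm ip0l sqrtr0.
exact: le_trans (proj_dist_le_inf pr) inf_le.
Qed.

End Dictionary.

Section PolkStep.
Variables (R : realType) (V : zmodType) (Xs : set V) (H : lmodType R).
Variable K : rkhs Xs H.
Local Notation ip := (ip K).
Local Notation hnorm := (hnorm K).
Implicit Types (D : seq V) (f p : H).

Lemma gradient_step_dist f fs p k eta lam c eps l1 l2 :
  0 < eta -> 0 <= lam ->
  hnorm ((1 - eta * lam) *: f - (eta * c) *: k - p) <= eps ->
  c * (ip fs k - ip f k) <= l2 - l1 ->
  hnorm (p - fs) ^+ 2 <= hnorm (f - fs) ^+ 2
    - 2 * eta * (l1 - l2 + lam / 2 * (hnorm f ^+ 2 - hnorm fs ^+ 2))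
    + 2 * eps * hnorm (f - fs) + eta ^+ 2 * hnorm (eta^-1 *: (f - p)) ^+ 2.
Proof.
move=> eta_gt0 lam_ge0 err_le grad_le.
set e := _ - p in err_le; set a := f - fs; set w := f - p.
have dist_sqr : hnorm (p - fs) ^+ 2 = ip a a - 2 * ip a w + ip w w.
  have -> : p - fs = a + - w by rewrite /a /w opprB [in RHS]addrC addrA subrK.
  by rewrite hnorm_sqr ip_sqrD ipNr ipNl ipNr opprK; lra.
have aw : ip a w = ip a e + eta * lam * ip a f + eta * c * ip a k.
  by rewrite /w /e !ipBr !ipZr; lra.
have reg_le : ip f f - ip fs fs <= 2 * ip a f := ip_sqr_sub_le K f fs.
have loss_le : eta * (l1 - l2) <= eta * c * ip a k.
  by rewrite -mulrA ler_pM2l // ipBl; lra.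
have err_ip : - ip a e <= eps * hnorm a.
  have := cauchy_schwarz K a (- e); rewrite ipNr hnormN => /le_trans; apply.
  by rewrite mulrC ler_wpM2r ?hnorm_ge0.
have w_sqr : ip w w = eta ^+ 2 * hnorm (eta^-1 *: w) ^+ 2.
  by rewrite hnorm_sqr ipZl ipZr; field; exact: lt0r_neq0.
have reg_mul : eta * lam * (ip f f - ip fs fs) <= eta * lam * (2 * ip a f).
  by rewrite ler_wpM2l // mulr_ge0 // ltW.
rewrite dist_sqr w_sqr aw !(hnorm_sqr K f) !(hnorm_sqr K fs) !(hnorm_sqr K a).
lra.
Qed.

Lemma polk_step_dist D D' f fs p x y (l : R -> R -> R) eta lam eps :
  0 < eta -> 0 <= lam -> 0 <= eps -> spanD K D f ->
  derivable (l^~ y) (ev K f x) 1 -> convex_real (l^~ y) ->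
  let ftil := (1 - eta * lam) *: f - (eta * lossd l (ev K f x) y) *: ksec K x in
  komp_run K eps ftil (rcons D x) D' -> is_proj K D' ftil p ->
  hnorm (p - fs) ^+ 2 <= hnorm (f - fs) ^+ 2
    - 2 * eta * (l (ev K f x) y - l (ev K fs x) y
                 + lam / 2 * (hnorm f ^+ 2 - hnorm fs ^+ 2))
    + 2 * eps * hnorm (f - fs) + eta ^+ 2 * hnorm (eta^-1 *: (f - p)) ^+ 2.
Proof.
move=> eta_gt0 lam_ge0 eps_ge0 fD l_der l_cvx ftil run pr.
apply: gradient_step_dist => //.
  apply: komp_proj_dist_le eps_ge0 run _ pr.
  by apply: spanDB; apply: spanDZ; [exact: spanD_rcons | exact: spanD_rcons_ksec].
exact: convex_derive1_le.
Qed.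

Lemma proj_iter_spanD (F : nat -> H) (Dic : nat -> seq V) (G : nat -> H) :
  F 0%N = 0 -> (forall t, is_proj K (Dic t.+1) (G t) (F t.+1)) ->
  forall t, spanD K (Dic t) (F t).
Proof. by move=> F0 Fproj [|t]; [rewrite F0; exact: spanD0 | case: (Fproj t)]. Qed.

End PolkStep.

Section Expectation.
Context d (Z : measurableType d) (R : realType).
Local Open Scope ereal_scope.

Lemma integral_le_Rintegral (mu : {measure set Z -> \bar R}) (f g : Z -> R) :
  measurable_fun setT f -> mu.-integrable setT (EFin \o g) ->
  (forall z, 0 <= f z)%R -> (forall z, f z <= g z)%R ->
  \int[mu]_z (f z)%:E <= (\int[mu]_z g z)%:E.
Proof.
move=> mf ig f_ge0 fg.
rewrite fineK; last exact: (integrable_fin_num measurableT ig).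
apply: (@ge0_le_integral _ _ _ mu setT measurableT).
- by move=> z _; rewrite lee_fin.
- exact/measurable_realfun.measurable_EFinP.
- exact: measurable_int ig.
- by move=> z _; rewrite lee_fin.
Qed.

Lemma ge0_integrable_bounded (mu : {measure set Z -> \bar R}) (u : Z -> R) (M : R) :
  measurable_fun setT u -> (forall z, 0 <= u z)%R -> \int[mu]_z (u z)%:E <= M%:E ->
  mu.-integrable setT (EFin \o u).
Proof.
move=> u_meas u_ge0 u_le; apply/integrableP; split.
  exact/measurable_realfun.measurable_EFinP.
under eq_integral => z _ do rewrite gee0_abs ?lee_fin //.
exact: le_lt_trans u_le (ltry _).
Qed.

Lemma Rintegral_le (mu : {measure set Z -> \bar R}) (u : Z -> R) (M : R) :
  mu.-integrable setT (EFin \o u) -> \int[mu]_z (u z)%:E <= M%:E ->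
  (\int[mu]_z u z <= M)%R.
Proof. by move=> iu; rewrite -lee_fin fineK // (integrable_fin_num measurableT iu). Qed.

Lemma integrableZl_EFin (mu : {measure set Z -> \bar R}) (k : R) (u : Z -> R) :
  mu.-integrable setT (EFin \o u) -> mu.-integrable setT (EFin \o (fun z => k * u z)%R).
Proof.
move=> iu; apply: (eq_integrable measurableT _ _ _ (integrableZl measurableT k iu)).
by move=> z _ /=; rewrite EFinM.
Qed.

Lemma integrableD_EFin (mu : {measure set Z -> \bar R}) (u v : Z -> R) :
  mu.-integrable setT (EFin \o u) -> mu.-integrable setT (EFin \o v) ->
  mu.-integrable setT (EFin \o (fun z => u z + v z)%R).
Proof.
move=> iu iv; apply: (eq_integrable measurableT _ _ _ (integrableD measurableT iu iv)).
by move=> z _ /=; rewrite EFinD.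
Qed.

Section Affine.
Variables (mu : probability Z R) (c a b e : R) (f g h : Z -> R).
Hypotheses (i_f : mu.-integrable setT (EFin \o f))
  (i_g : mu.-integrable setT (EFin \o g)) (i_h : mu.-integrable setT (EFin \o h)).

Let i_cf : mu.-integrable setT (EFin \o (fun z => c + a * f z)%R).
Proof.
exact: integrableD_EFin (finite_measure_integrable_cst mu c measurableT)
  (integrableZl_EFin a i_f).
Qed.

Let i_cfg : mu.-integrable setT (EFin \o (fun z => c + a * f z + b * g z)%R).
Proof. exact: integrableD_EFin i_cf (integrableZl_EFin b i_g). Qed.

Lemma integrable_affine :
  mu.-integrable setT (EFin \o (fun z => c + a * f z + b * g z + e * h z)%R).
Proof. exact: integrableD_EFin i_cfg (integrableZl_EFin e i_h). Qed.

Lemma Rintegral_affine :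
  (\int[mu]_z (c + a * f z + b * g z + e * h z) =
   c + a * \int[mu]_z f z + b * \int[mu]_z g z + e * \int[mu]_z h z)%R.
Proof.
rewrite (RintegralD measurableT i_cfg (integrableZl_EFin e i_h)).
rewrite (RintegralD measurableT i_cf (integrableZl_EFin b i_g)).
rewrite (RintegralD measurableT (finite_measure_integrable_cst mu c measurableT)
  (integrableZl_EFin a i_f)).
have mu1 : fine (mu setT) = 1%R by rewrite (probability_setT mu).
by rewrite !RintegralZl // Rintegral_cst // mu1 mulr1.
Qed.

End Affine.

End Expectation.

Lemma riskE (R : realType) (V : zmodType) (Xs : set V) (H : lmodType R)
    (K : rkhs Xs H) (d : measure_display) (Z : measurableType d)
    (mu : probability Z R) (xo : Z -> V) (yo : Z -> R) (l : R -> R -> R)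
    (lam : R) (f : H) :
  risk K mu xo yo l lam f =
  \int[mu]_z l (ev K f (xo z)) (yo z) + lam / 2 * hnorm K f ^+ 2.
Proof. by []. Qed.

Theorem lemma1 (R : realType) (p : nat) (Xs : set 'rV[R]_p) (Ys : set R)
  (H : lmodType R) (K : rkhs Xs H)
  (d : measure_display) (Z : measurableType d) (mu : probability Z R)
  (xo : Z -> 'rV[R]_p) (yo : Z -> R) (l : R -> R -> R)
  (lam C Xb sigma : R) (eta eps : nat -> R)
  (F : nat -> (nat -> Z) -> H) (Dic : nat -> (nat -> Z) -> seq 'rV[R]_p)
  (fstar : H) :
  0 < lam -> (forall t, 0 < eta t) -> (forall t, 0 < eps t) ->
  (* the random pair (x,y) = (xo z, yo z), z ~ mu, takes values in X x Y *)
  (forall z, Xs (xo z)) -> (forall z, Ys (yo z)) ->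
  (forall f : H, mu.-integrable setT (fun z => (l (ev K f (xo z)) (yo z))%:E)) ->
  (forall f : H, risk K mu xo yo l lam fstar <= risk K mu xo yo l lam f) ->
  (* (A1) *)
  compact Xs -> compact Ys ->
  (forall x, Xs x -> Num.sqrt (kappa K x x) <= Xb) ->
  (* (A2) *)
  (forall (y z z' : R), Ys y -> `|l z y - l z' y| <= C * `|z - z'|) ->
  (* (A3) *)
  (forall y, Ys y ->
     (forall z : R, derivable (fun z' => l z' y) z 1) /\
     (forall (a b u : R), 0 <= u -> u <= 1 ->
        l (u * a + (1 - u) * b) y <= u * l a y + (1 - u) * l b y)) ->
  (* POLK, run on the i.i.d. sample sequence s : nat -> Z,
     (x_t, y_t) = (xo (s t), yo (s t)) *)
  (forall s, F 0%N s = 0 /\ Dic 0%N s = [::]) ->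
  (forall t s s', (forall i, (i < t)%N -> s i = s' i) ->
     F t s = F t s' /\ Dic t s = Dic t s') ->
  (forall t s,
     let ft := F t s in
     let xt := xo (s t) in
     let ftil := (1 - eta t * lam) *: ft
                 - (eta t * lossd l (ev K ft xt) (yo (s t))) *: ksec K xt in
     komp_run K (eps t) ftil (rcons (Dic t s) xt) (Dic t.+1 s) /\
     is_proj K (Dic t.+1 s) ftil (F t.+1 s)) ->
  (forall t s (g : H),
     measurable_fun setT (fun z => hnorm K (F t.+1 (upd s t z) - g))) ->
  (* (A4) *)
  (forall t s,
     (\int[mu]_z
        (hnorm K ((eta t)^-1 *: (F t s - F t.+1 (upd s t z))) ^+ 2)%:E
      <= (sigma ^+ 2)%:E)%E) ->
  forall t s,
    (\int[mu]_z (hnorm K (F t.+1 (upd s t z) - fstar) ^+ 2)%:E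
     <= (hnorm K (F t s - fstar) ^+ 2
         - 2 * eta t * (risk K mu xo yo l lam (F t s) - risk K mu xo yo l lam fstar)
         + 2 * eps t * hnorm K (F t s - fstar)
         + eta t ^+ 2 * sigma ^+ 2)%:E)%E.
Proof.
move=> lam_gt0 eta_gt0 eps_gt0 _ Ys_y loss_int _ _ _ _ _ loss_cvx polk0 causal polk
  meas_dist grad_var t s.
set Ft := F t s.
have past_fixed z : F t (upd s t z) = Ft /\ Dic t (upd s t z) = Dic t s.
  by apply: causal => i it; rewrite /upd ifN // neq_ltn it.
have Ft_span : spanD K (Dic t s) Ft :=
  proj_iter_spanD (F := F^~ s) (Dic := Dic^~ s) (polk0 s).1 (fun t => (polk t s).2) t.
set N := fun z => hnorm K ((eta t)^-1 *: (Ft - F t.+1 (upd s t z))) ^+ 2.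
pose L f z := l (ev K f (xo z)) (yo z).
pose c0 := hnorm K (Ft - fstar) ^+ 2
  - eta t * lam * (hnorm K Ft ^+ 2 - hnorm K fstar ^+ 2) + 2 * eps t * hnorm K (Ft - fstar).
have step z : hnorm K (F t.+1 (upd s t z) - fstar) ^+ 2 <=
    c0 + (- (2 * eta t)) * L Ft z + (2 * eta t) * L fstar z + eta t ^+ 2 * N z.
  have [Fz Dz] := past_fixed z.
  have sz : upd s t z t = z by rewrite /upd eqxx.
  have [l_der l_cvx] := loss_cvx _ (Ys_y z).
  have [run pr] := polk t (upd s t z); rewrite /= Fz Dz sz in run pr.
  have := polk_step_dist fstar (eta_gt0 t) (ltW lam_gt0) (ltW (eps_gt0 t)) Ft_span
    (l_der _) l_cvx run pr.
  by rewrite /c0 /L /N; lra.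
have N_meas : measurable_fun setT N.
  have -> : N = fun z => (`|(eta t)^-1| * hnorm K (F t.+1 (upd s t z) - Ft)) ^+ 2.
    by apply/funext => z; rewrite /N hnormZ -opprB hnormN.
  apply: measurable_realfun.measurable_funX.
  exact: measurable_realfun.measurable_funM (meas_dist t s Ft).
have N_int := ge0_integrable_bounded N_meas (fun z => sqr_ge0 _) (grad_var t s).
have N_le := Rintegral_le N_int (grad_var t s).
have Q_int := @integrable_affine _ _ _ mu c0 (- (2 * eta t)) (2 * eta t) (eta t ^+ 2)
  (L Ft) (L fstar) N (loss_int Ft) (loss_int fstar) N_int.
apply: le_trans (integral_le_Rintegral
  (measurable_realfun.measurable_funX _ (meas_dist t s fstar)) Q_int
  (fun z => sqr_ge0 _) step) _.
rewrite lee_fin Rintegral_affine ?loss_int // !riskE.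
have := ler_wpM2l (sqr_ge0 (eta t)) N_le.
rewrite /c0; lra.
Qed.
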